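(* Let $\mathcal X\subseteq\mathbb R^m$ be nonempty, convex and compact, $F:\mathbb R^m\to\mathbb R^r$ affine, $C\in\mathbb R^{r\times n}$ acute with nonzero columns, and $\Theta(x,y)=\frac12\|F(x)-Cy\|^2$. For each $x$, let $\Theta^L(x,\cdot):[0,1]^n\to\mathbb R$ be the Lovász extension of $\Theta(x,\cdot)|_{\{0,1\}^n}$. Then: (i) the problem $\min_{x\in\mathcal X}\max_{y\in[0,1]^n}\Theta^L(x,y)$ admits a saddle point $(x^*,y^* )\in\mathcal X\times[0,1]^n$, i.e. $\Theta^L(x^*,y)\le\Theta^L(x^*,y^* )\le\Theta^L(x,y^* )$ for all $x\in\mathcal X$, $y\in[0,1]^n$; (ii) for every saddle point $(x^*,y^* )$ of that problem and every $\bar y\in\operatorname{SOL}(\Theta(x^*,\cdot),\{0,1\}^n)$, the pair $(x^*,\bar y)$ is a global minimax point of $\min_{x\in\mathcal X}\max_{y\in\{0,1\}^n}\Theta(x,y)$; (iii) for every saddle point $(x^*,y^* )$ of that problem, $y^*$ lies in the convex hull of $\operatorname{SOL}(\Theta(x^*,\cdot),\{0,1\}^n)$.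
   Context: $C=(c_1,\dots,c_n)$ is acute if $c_i^\top c_j\ge0$ for all $i\neq j$. Lovász extension: for $h:\{0,1\}^n\to\mathbb R$ and $y\in[0,1]^n$, order the components $y_{j_1}\ge\cdots\ge y_{j_n}$ with $(j_1,\dots,j_n)$ a permutation of $[n]$, set $y_{j_0}=1$, $y_{j_{n+1}}=0$, and $h^L(y)=\sum_{k=0}^n h(\mathbf e_{\{j_1,\dots,j_k\}})(y_{j_k}-y_{j_{k+1}})$, where $\mathbf e_S\in\{0,1\}^n$ is the indicator vector of $S\subseteq[n]$. $\operatorname{SOL}(f,\mathcal C)$ is the set of maximizers of $f$ over $\mathcal C$. A global minimax point of $\min_{x\in\mathcal X}\max_{y\in\mathcal Y}\Theta$ is a pair $(x^*,y^* )\in\mathcal X\times\mathcal Y$ with $\max_{y\in\mathcal Y}\Theta(x^*,y)\le\Theta(x^*,y^* )\le\min_{x\in\mathcal X}\max_{y\in\mathcal Y}\Theta(x,y)$. *)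

From mathcomp Require Import all_boot all_order all_algebra.
From mathcomp Require Import all_classical all_reals all_analysis.
Set Implicit Arguments. Unset Strict Implicit. Unset Printing Implicit Defensive.
Import Order.TTheory GRing.Theory Num.Theory.
Import numFieldTopology.Exports numFieldNormedType.Exports.
Local Open Scope classical_set_scope.
Local Open Scope ring_scope.

Section Defs.
Variable R : realType.

Definition affine_map (m r : nat) (F : 'cV[R]_m -> 'cV[R]_r) : Prop :=
  exists (A : 'M[R]_(r, m)) (b : 'cV[R]_r), forall x, F x = A *m x + b.

Definition acute (r n : nat) (C : 'M[R]_(r, n)) : Prop :=
  forall i j : 'I_n, i != j -> 0 <= ((col i C)^T *m col j C) 0 0.

Definition nonzero_columns (r n : nat) (C : 'M[R]_(r, n)) : Prop :=
  forall j : 'I_n, col j C != 0.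

Definition sqnorm (r : nat) (v : 'cV[R]_r) : R := \sum_(k < r) (v k 0) ^+ 2.

Definition Theta (m r n : nat) (F : 'cV[R]_m -> 'cV[R]_r) (C : 'M[R]_(r, n))
  (x : 'cV[R]_m) (y : 'cV[R]_n) : R := 2^-1 * sqnorm (F x - C *m y).

Definition binvec (n : nat) : set 'cV[R]_n :=
  [set y | forall i, y i 0 = 0 \/ y i 0 = 1].
Definition unitbox (n : nat) : set 'cV[R]_n :=
  [set y | forall i, 0 <= y i 0 <= 1].

Definition indic (n : nat) (S : seq 'I_n) : 'cV[R]_n :=
  \col_i (if i \in S then 1 else 0).

(* The indices are ordered so that
   y_{j_1} >= ... >= y_{j_n} (via a sort of enum 'I_n); y_{j_0} = 1 and
   y_{j_{n+1}} = 0; h^L(y) = sum_{k=0}^n h(e_{j_1..j_k}) (y_{j_k} - y_{j_{k+1}}). *)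
Definition lovasz_order (n : nat) (y : 'cV[R]_n) : seq 'I_n :=
  sort (fun i j : 'I_n => y j 0 <= y i 0) (enum 'I_n).

Definition lovasz_y (n : nat) (y : 'cV[R]_n) (k : nat) : R :=
  if k is k'.+1 then nth 0 [seq y j 0 | j <- lovasz_order y] k' else 1.

Definition lovasz (n : nat) (h : 'cV[R]_n -> R) (y : 'cV[R]_n) : R :=
  \sum_(k < n.+1)
     h (indic (take k (lovasz_order y))) * (lovasz_y y k - lovasz_y y k.+1).

Definition SOL (n : nat) (f : 'cV[R]_n -> R) (Cs : set 'cV[R]_n) : set 'cV[R]_n :=
  [set y | Cs y /\ forall z, Cs z -> f z <= f y].

Definition saddle_point (m n : nat) (X : set 'cV[R]_m) (Y : set 'cV[R]_n)
  (Th : 'cV[R]_m -> 'cV[R]_n -> R) (xs : 'cV[R]_m) (ys : 'cV[R]_n) : Prop :=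
  X xs /\ Y ys /\
  (forall y, Y y -> Th xs y <= Th xs ys) /\
  (forall x, X x -> Th xs ys <= Th x ys).

(* global minimax point of min_{x in X} max_{y in Y} Th, for Y on which the
   inner max is attained:
   max_{y in Y} Th(xs,y) <= Th(xs,ys) <= min_{x in X} max_{y in Y} Th(x,y).
   The second inequality is written as: for every x in X, Th(xs,ys) is at
   most max_{y in Y} Th(x,y), i.e. some y in Y has Th(xs,ys) <= Th(x,y). *)
Definition global_minimax (m n : nat) (X : set 'cV[R]_m) (Y : set 'cV[R]_n)
  (Th : 'cV[R]_m -> 'cV[R]_n -> R) (xs : 'cV[R]_m) (ys : 'cV[R]_n) : Prop :=
  X xs /\ Y ys /\
  (forall y, Y y -> Th xs y <= Th xs ys) /\
  (forall x, X x -> exists2 y, Y y & Th xs ys <= Th x y).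

Definition conv_hull (n : nat) (S : set 'cV[R]_n) : set 'cV[R]_n :=
  [set y | exists (k : nat) (p : 'I_k -> 'cV[R]_n) (w : 'I_k -> R),
     (forall i, S (p i)) /\ (forall i, 0 <= w i) /\
     \sum_(i < k) w i = 1 /\ y = \sum_(i < k) w i *: p i].

End Defs.

From Pilot Require Import Defs.
From mathcomp Require Import all_boot all_order all_algebra.
From mathcomp Require Import all_classical all_reals all_analysis.
From mathcomp Require Import ring lra.
Import Order.TTheory GRing.Theory Num.Theory.
Import numFieldTopology.Exports numFieldNormedType.Exports.
Local Open Scope classical_set_scope.
Local Open Scope ring_scope.

(* For a probability vector [mu] on {0,1}^n let [mixed_Theta x mu] be the
   [mu]-average of [Theta x] and [barycentre mu] its barycentre; by the
   variance identity their difference [mixed_Theta x mu - Theta x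
   (barycentre mu)] does not depend on [x].  Let [mu0] maximise
   [mu |-> min_X mixed_Theta(., mu)] over the simplex and [x0] minimise
   [mixed_Theta(., mu0)].  Moving [mu0] a little towards a vertex [q] and
   comparing the first-order optimality conditions of the two minimisers shows
   [Theta x0 q <= mixed_Theta x0 mu0], so every vertex charged by [mu0]
   maximises [Theta x0] on {0,1}^n.  Acuteness of [C] makes [Theta x0]
   supermodular, so these maximisers form a lattice, which then contains every
   superlevel set of [barycentre mu0].  The Lovasz extension at
   [barycentre mu0] is a convex combination of values on such sets, hence the
   maximum, and [(x0, barycentre mu0)] is a saddle point.  Parts (ii) and
   (iii) rest on [Theta <= Theta^L], which is Jensen's inequality for the
   decomposition of [y] along its Lovasz chain. *)

Section InnerProduct.
Context {R : realType} {r : nat}.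
Implicit Types (a : R) (u v w : 'cV[R]_r).

Definition vdot u v : R := \sum_k u k 0 * v k 0.

Lemma sqnorm_vdot u : sqnorm u = vdot u u.
Proof. by apply: eq_bigr => k _; rewrite expr2. Qed.

Lemma vdotC u v : vdot u v = vdot v u.
Proof. by apply: eq_bigr => k _; rewrite mulrC. Qed.

Lemma vdotDr u v w : vdot u (v + w) = vdot u v + vdot u w.
Proof. by rewrite /vdot -big_split; apply: eq_bigr => k _; rewrite mxE mulrDr. Qed.

Lemma vdotNr u v : vdot u (- v) = - vdot u v.
Proof. by rewrite /vdot -sumrN; apply: eq_bigr => k _; rewrite mxE mulrN. Qed.

Lemma vdotZr a u v : vdot u (a *: v) = a * vdot u v.
Proof. by rewrite /vdot mulr_sumr; apply: eq_bigr => k _; rewrite mxE mulrCA. Qed.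

Lemma vdotDl u v w : vdot (v + w) u = vdot v u + vdot w u.
Proof. by rewrite !(vdotC _ u) vdotDr. Qed.

Lemma vdotNl u v : vdot (- v) u = - vdot v u.
Proof. by rewrite !(vdotC _ u) vdotNr. Qed.

Lemma vdotZl a u v : vdot (a *: v) u = a * vdot v u.
Proof. by rewrite !(vdotC _ u) vdotZr. Qed.

Lemma vdot_sumr {I : finType} u (v : I -> 'cV[R]_r) :
  vdot u (\sum_i v i) = \sum_i vdot u (v i).
Proof.
elim/big_rec2: _ => [|i y1 y2 _ <-]; last by rewrite vdotDr.
by rewrite /vdot big1 // => k _; rewrite mxE mulr0.
Qed.

Lemma sqnorm_ge0 u : 0 <= sqnorm u.
Proof. by apply: sumr_ge0 => k _; rewrite sqr_ge0. Qed.

Lemma sqnorm0 : sqnorm (0 : 'cV[R]_r) = 0.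
Proof. by rewrite /sqnorm big1 // => k _; rewrite mxE expr0n. Qed.

Lemma sqnormD u v : sqnorm (u + v) = sqnorm u + 2 * vdot u v + sqnorm v.
Proof. by rewrite !sqnorm_vdot vdotDl !vdotDr (vdotC v u); ring. Qed.

Lemma sqnormB u v : sqnorm (u - v) = sqnorm u - 2 * vdot u v + sqnorm v.
Proof. by rewrite sqnormD vdotNr !sqnorm_vdot vdotNl vdotNr opprK; ring. Qed.

Lemma sqnormZ a u : sqnorm (a *: u) = a ^+ 2 * sqnorm u.
Proof. by rewrite !sqnorm_vdot vdotZl vdotZr mulrA expr2. Qed.

Lemma convex_comb_sqnormB {I : finType} (c : I -> R) (z : I -> 'cV[R]_r) u :
  \sum_i c i = 1 ->
  \sum_i c i * sqnorm (u - z i) =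
  sqnorm (u - \sum_i c i *: z i)
  + (\sum_i c i * sqnorm (z i) - sqnorm (\sum_i c i *: z i)).
Proof.
move=> c_sum1.
have -> : \sum_i c i * sqnorm (u - z i) = sqnorm u * (\sum_i c i)
    - 2 * vdot u (\sum_i c i *: z i) + \sum_i c i * sqnorm (z i).
  rewrite vdot_sumr !mulr_sumr -sumrN -!big_split /=.
  by apply: eq_bigr => i _; rewrite sqnormB vdotZr; ring.
by rewrite sqnormB c_sum1; ring.
Qed.

Lemma sqnorm_convex_comb_le {I : finType} (c : I -> R) (z : I -> 'cV[R]_r) :
  (forall i, 0 <= c i) -> \sum_i c i = 1 ->
  sqnorm (\sum_i c i *: z i) <= \sum_i c i * sqnorm (z i).
Proof.
move=> c_ge0 c_sum1; rewrite -subr_ge0.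
have := convex_comb_sqnormB c z (\sum_i c i *: z i) c_sum1.
rewrite subrr sqnorm0 add0r => <-.
by apply: sumr_ge0 => i _; rewrite mulr_ge0 ?sqnorm_ge0.
Qed.

End InnerProduct.

Section BinaryLattice.
Context {R : realType} {n : nat}.
Implicit Types a b : 'cV[R]_n.

(* On 0/1-vectors these are the coordinatewise maximum and minimum. *)
Definition bjoin a b : 'cV[R]_n := \col_i (a i 0 + b i 0 - a i 0 * b i 0).
Definition bmeet a b : 'cV[R]_n := \col_i (a i 0 * b i 0).

Lemma binvec_bjoin {a b} : binvec a -> binvec b -> binvec (bjoin a b).
Proof.
move=> a_bin b_bin i; rewrite mxE.
by case: (a_bin i) => ->; case: (b_bin i) => ->; [left|right|right|right]; ring.
Qed.

Lemma binvec_bmeet {a b} : binvec a -> binvec b -> binvec (bmeet a b).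
Proof.
move=> a_bin b_bin i; rewrite mxE.
by case: (a_bin i) => ->; case: (b_bin i) => ->; [left|left|left|right]; ring.
Qed.

Lemma bjoin_bmeet_sum a b : bjoin a b + bmeet a b = a + b.
Proof. by apply/matrixP => i j; rewrite !mxE (ord1 j); ring. Qed.

Lemma bjoin0 a : bjoin a 0 = a.
Proof. by apply/matrixP => i j; rewrite !mxE (ord1 j) mulr0 addr0 subr0. Qed.

End BinaryLattice.

Lemma bool01_join_meet_gram_ge0 {R : realDomainType} {ai bi aj bj : R} :
  ai = 0 \/ ai = 1 -> bi = 0 \/ bi = 1 -> aj = 0 \/ aj = 1 -> bj = 0 \/ bj = 1 ->
  0 <= (ai + bi - ai * bi) * (aj + bj - aj * bj) + (ai * bi) * (aj * bj)
       - (ai * aj + bi * bj).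
Proof.
by case=> ->; case=> ->; case=> ->; case=> ->;
  rewrite ?(mul0r, mulr0, mul1r, mulr1, add0r, addr0, subr0, subrr, sub0r); lra.
Qed.

Lemma bool01_join_meet_gram_diag {R : comPzRingType} {ai bi : R} :
  ai = 0 \/ ai = 1 -> bi = 0 \/ bi = 1 ->
  (ai + bi - ai * bi) * (ai + bi - ai * bi) + (ai * bi) * (ai * bi)
  - (ai * ai + bi * bi) = 0.
Proof. by case=> ->; case=> ->; ring. Qed.

Lemma sqnorm_mulmx {R : realType} {r n} (C : 'M[R]_(r, n)) (z : 'cV[R]_n) :
  sqnorm (C *m z) = \sum_i \sum_j z i 0 * z j 0 * ((col i C)^T *m col j C) 0 0.
Proof.
transitivity (\sum_k \sum_i \sum_j z i 0 * z j 0 * (C k i * C k j)).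
  apply: eq_bigr => k _; rewrite expr2 !mxE mulr_suml; apply: eq_bigr => i _.
  by rewrite mulr_sumr; apply: eq_bigr => j _; ring.
rewrite exchange_big; apply: eq_bigr => i _.
rewrite exchange_big; apply: eq_bigr => j _.
by rewrite mxE mulr_sumr; apply: eq_bigr => k _; rewrite !mxE; ring.
Qed.

Lemma acute_sqnorm_supermodular {R : realType} {r n} {C : 'M[R]_(r, n)} {a b : 'cV[R]_n} :
  acute C -> binvec a -> binvec b ->
  sqnorm (C *m a) + sqnorm (C *m b) <= sqnorm (C *m bjoin a b) + sqnorm (C *m bmeet a b).
Proof.
move=> C_acute a_bin b_bin; rewrite -subr_ge0 !sqnorm_mulmx -!big_split /= -sumrB.
apply: sumr_ge0 => i _; rewrite -!big_split /= -sumrB; apply: sumr_ge0 => j _.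
set g := ((col i C)^T *m col j C) 0 0.
rewrite !mxE -!mulrDl -mulrBl.
have [<-|ij] := eqVneq i j.
  by rewrite (bool01_join_meet_gram_diag (a_bin i) (b_bin i)) mul0r.
apply: mulr_ge0; last exact: C_acute ij.
exact: bool01_join_meet_gram_ge0 (a_bin i) (b_bin i) (a_bin j) (b_bin j).
Qed.

Section Theta.
Context {R : realType} {m r n : nat}.
Variables (F : 'cV[R]_m -> 'cV[R]_r) (C : 'M[R]_(r, n)).

Lemma Theta_ge0 x y : 0 <= Theta F C x y.
Proof. by rewrite mulr_ge0 ?sqnorm_ge0 // invr_ge0 ler0n. Qed.

Lemma convex_comb_Theta {I : finType} (c : I -> R) (z : I -> 'cV[R]_n) x :
  \sum_i c i = 1 ->
  \sum_i c i * Theta F C x (z i) =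
  Theta F C x (\sum_i c i *: z i)
  + 2^-1 * (\sum_i c i * sqnorm (C *m z i) - sqnorm (C *m \sum_i c i *: z i)).
Proof.
move=> c_sum1.
have CE : C *m (\sum_i c i *: z i) = \sum_i c i *: (C *m z i).
  by rewrite mulmx_sumr; apply: eq_bigr => i _; rewrite scalemxAr.
transitivity (2^-1 * \sum_i c i * sqnorm (F x - C *m z i)).
  by rewrite mulr_sumr; apply: eq_bigr => i _; rewrite /Theta; ring.
by rewrite /Theta CE (convex_comb_sqnormB c (fun i => C *m z i)) //; ring.
Qed.

Lemma Theta_supermodular x {a b : 'cV[R]_n} : acute C -> binvec a -> binvec b ->
  Theta F C x a + Theta F C x b <= Theta F C x (bjoin a b) + Theta F C x (bmeet a b).
Proof.
move=> C_acute a_bin b_bin.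
have lin : vdot (F x) (C *m bjoin a b) + vdot (F x) (C *m bmeet a b) =
           vdot (F x) (C *m a) + vdot (F x) (C *m b).
  by rewrite -!vdotDr -!mulmxDr bjoin_bmeet_sum.
have := acute_sqnorm_supermodular C_acute a_bin b_bin.
rewrite /Theta !sqnormB; lra.
Qed.

Lemma SOL_bjoin_bmeet x a b : acute C ->
  SOL (Theta F C x) (@binvec R n) a -> SOL (Theta F C x) (@binvec R n) b ->
  SOL (Theta F C x) (@binvec R n) (bjoin a b) /\ SOL (Theta F C x) (@binvec R n) (bmeet a b).
Proof.
move=> C_acute [a_bin a_max] [b_bin b_max].
have join_bin := binvec_bjoin a_bin b_bin; have meet_bin := binvec_bmeet a_bin b_bin.
have := Theta_supermodular x C_acute a_bin b_bin.
have := a_max _ join_bin; have := a_max _ meet_bin; have := b_max _ a_bin; have := a_max _ b_bin.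
by move=> *; split; split=> // z z_bin; have := a_max _ z_bin; lra.
Qed.

End Theta.

Section Superlevel.
Context {R : realType} {n : nat} {I : Type}.
Variables (w : I -> R) (z : I -> 'cV[R]_n).
Hypotheses (w_ge0 : forall i, 0 <= w i) (z_bin : forall i, binvec (z i)).

Definition wsum (l : seq I) (k : 'I_n) : R := \sum_(i <- l) w i * z i k 0.

Definition superlevel (l : seq I) (s : R) : 'cV[R]_n := \col_k ((s < wsum l k)%R : bool)%:R.

Lemma wsum_bounds l k : 0 <= wsum l k <= \sum_(i <- l) w i.
Proof.
rewrite /wsum; apply/andP; split.
  by apply: sumr_ge0 => i _; case: (z_bin i k) => ->; rewrite ?mulr0 ?mulr1.
by apply: ler_sum => i _; case: (z_bin i k) => ->; rewrite ?mulr0 ?mulr1.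
Qed.

Lemma superlevel_cons i l s :
  superlevel (i :: l) s = bjoin (bmeet (z i) (superlevel l (s - w i))) (superlevel l s).
Proof.
apply/matrixP => k j; rewrite !mxE /wsum big_cons -/(wsum l k).
case: (z_bin i k) => ->; first by rewrite mulr0 !mul0r !add0r subr0.
rewrite !mul1r mulr1 -ltrBlDl.
have mono : s < wsum l k -> s - w i < wsum l k.
  by move=> h; apply: le_lt_trans h; rewrite lerBlDr lerDl.
case E1: (s - w i < _); case E2: (s < _) => /=;
  rewrite ?mul1r ?mul0r ?addr0 ?add0r ?subr0 ?subrr ?oppr0 //.
- by rewrite addrK.
- by move: (mono E2); rewrite E1.
Qed.

Variable S : set 'cV[R]_n.
Hypotheses (S_lattice : forall {a b}, S a -> S b -> S (bjoin a b) /\ S (bmeet a b))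
  (S_support : forall {i}, 0 < w i -> S (z i)).

(* Peeling off one term of the family: a superlevel set of the longer family
   is the join of two superlevel sets of the shorter one, one of them cut
   down by [z i]. *)
Lemma superlevel_in l s : 0 <= s -> s < \sum_(i <- l) w i -> S (superlevel l s).
Proof.
elim: l s => [|i l IH] s s_ge0; first by rewrite big_nil => /(le_lt_trans s_ge0); rewrite ltxx.
rewrite big_cons => s_lt.
have := w_ge0 i; rewrite le_eqVlt => /predU1P[wi0|wi_gt0].
  have -> : superlevel (i :: l) s = superlevel l s.
    by apply/matrixP => k j; rewrite !mxE /wsum big_cons -wi0 mul0r add0r.
  by apply: IH; rewrite // -[X in X + _]wi0 add0r in s_lt.
have S_cut : S (bmeet (z i) (superlevel l (s - w i))).
  have [sw_lt0|sw_ge0] := ltP (s - w i) 0.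
    have -> : bmeet (z i) (superlevel l (s - w i)) = z i.
      apply/matrixP => k j; rewrite !mxE (ord1 j).
      by have /andP[+ _] := wsum_bounds l k => /(lt_le_trans sw_lt0) ->; rewrite mulr1.
    exact: S_support.
  have := IH _ sw_ge0; rewrite ltrBlDl => /(_ s_lt) S_l.
  exact: (S_lattice (S_support wi_gt0) S_l).2.
rewrite superlevel_cons.
have [s_lt_l|s_ge_l] := ltP s (\sum_(j <- l) w j).
  exact: (S_lattice S_cut (IH s s_ge0 s_lt_l)).1.
suff -> : superlevel l s = 0 by rewrite bjoin0.
apply/matrixP => k j; rewrite !mxE.
by have /andP[_ /le_trans/(_ s_ge_l)] := wsum_bounds l k; rewrite leNgt => /negbTE ->.
Qed.

End Superlevel.

Section LovaszChain.
Context {R : realType} {n : nat}.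
Variable y : 'cV[R]_n.
Local Notation order := (lovasz_order y).
Local Notation ly := (lovasz_y y).

Definition lovasz_weight k : R := ly k - ly k.+1.
Definition lovasz_set k : 'cV[R]_n := Defs.indic R (take k order).

Lemma lovaszE (h : 'cV[R]_n -> R) :
  lovasz h y = \sum_(k < n.+1) lovasz_weight k * h (lovasz_set k).
Proof. by apply: eq_bigr => k _; rewrite mulrC. Qed.

Lemma binvec_lovasz_set k : binvec (lovasz_set k).
Proof. by move=> i; rewrite mxE; case: ifP; [right|left]. Qed.

Lemma size_lovasz_order : size order = n.
Proof. by rewrite size_sort size_enum_ord. Qed.

Lemma mem_lovasz_order i : i \in order.
Proof. by rewrite mem_sort mem_enum. Qed.

Lemma index_lovasz_order_lt i : (index i order < n)%N.
Proof. by rewrite -[X in (_ < X)%N]size_lovasz_order index_mem mem_lovasz_order. Qed.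

Lemma lovasz_order_sorted (i0 : 'I_n) p q : (p <= q < n)%N ->
  y (nth i0 order q) 0 <= y (nth i0 order p) 0.
Proof.
case/andP=> pq qn; apply: (sorted_leq_nth (leT := fun i j : 'I_n => y j 0 <= y i 0)).
- by move=> a b c /= h1 h2; exact: le_trans h2 h1.
- by move=> a /=.
- by apply: sort_sorted => a b /=; exact: le_total.
- by rewrite inE size_lovasz_order (leq_ltn_trans pq qn).
- by rewrite inE size_lovasz_order.
- exact: pq.
Qed.

Lemma lovasz_y_nth (i0 : 'I_n) k : (k < n)%N -> ly k.+1 = y (nth i0 order k) 0.
Proof. by move=> kn; rewrite /lovasz_y (nth_map i0) // size_lovasz_order. Qed.

Lemma lovasz_y_default k : (n <= k)%N -> ly k.+1 = 0.
Proof. by move=> nk; rewrite /lovasz_y nth_default // size_map size_lovasz_order. Qed.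

Lemma lovasz_y_index i : ly (index i order).+1 = y i 0.
Proof. by rewrite (lovasz_y_nth i) ?index_lovasz_order_lt // nth_index ?mem_lovasz_order. Qed.

Lemma sum_lovasz_weight p q : (p <= q)%N ->
  \sum_(p <= k < q) lovasz_weight k = ly p - ly q.
Proof.
move=> pq; rewrite -opprB -(telescope_sumr ly pq) -sumrN.
by apply: eq_bigr => k _; rewrite opprB.
Qed.

Lemma lovasz_weight_sum1 : \sum_(k < n.+1) lovasz_weight k = 1.
Proof.
by rewrite -(big_mkord xpredT) sum_lovasz_weight // lovasz_y_default // subr0.
Qed.

Lemma lovasz_weight_decomp : \sum_(k < n.+1) lovasz_weight k *: lovasz_set k = y.
Proof.
apply/matrixP => i j; rewrite (ord1 j) summxE.
have ilt := index_lovasz_order_lt i.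
transitivity (\sum_(k < n.+1) if (index i order < k)%N then lovasz_weight k else 0).
  apply: eq_bigr => k _; rewrite !mxE in_take ?mem_lovasz_order //.
  by case: ifP; rewrite ?mulr1 ?mulr0.
rewrite -(big_mkord xpredT (fun k => if (index i order < k)%N then lovasz_weight k else 0)).
rewrite (big_cat_nat (n := (index i order).+1)) //= 1?ltnW //.
rewrite big1_seq ?add0r; last first.
  by move=> k /andP[_]; rewrite mem_index_iota ltnS => /andP[_ /leq_gtF ->].
rewrite (eq_big_nat _ _ (F2 := lovasz_weight)); last by move=> k /andP[-> _].
by rewrite sum_lovasz_weight ?lovasz_y_index ?lovasz_y_default ?subr0 // ltnW.
Qed.

Hypothesis y_box : unitbox y.

Lemma lovasz_y_bounds k : 0 <= ly k <= 1.
Proof.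
case: k => [|k]; first by rewrite /lovasz_y ler01 lexx.
have [kn|nk] := ltnP k n; last by rewrite lovasz_y_default // lexx ler01.
by rewrite (lovasz_y_nth (Ordinal kn)) //; exact: y_box.
Qed.

Lemma lovasz_y_nonincreasing p q : (p <= q)%N -> ly q <= ly p.
Proof.
case: p => [|p] pq; first by have /andP[_ ->] := lovasz_y_bounds q.
case: q pq => [//|q]; rewrite ltnS => pq.
have [qn|nq] := ltnP q n; last first.
  by rewrite lovasz_y_default //; have /andP[] := lovasz_y_bounds p.+1.
have i0 : 'I_n := Ordinal qn.
rewrite (lovasz_y_nth i0) // (lovasz_y_nth i0) ?(leq_ltn_trans pq qn) //.
by apply: lovasz_order_sorted; rewrite pq qn.
Qed.

Lemma lovasz_weight_ge0 k : 0 <= lovasz_weight k.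
Proof. by rewrite subr_ge0 lovasz_y_nonincreasing. Qed.

Lemma lovasz_set_superlevel k : ly k.+1 < ly k ->
  lovasz_set k = \col_i ((ly k.+1 < y i 0)%R : bool)%:R.
Proof.
move=> lt_k; apply/matrixP => i j; rewrite !mxE in_take ?mem_lovasz_order // -lovasz_y_index.
case: ltnP => h; first by rewrite (lt_le_trans lt_k) // lovasz_y_nonincreasing.
by rewrite ltNge lovasz_y_nonincreasing.
Qed.

End LovaszChain.

Section ConvexComb.
Context {R : numDomainType} {I : finType} {c f : I -> R}.
Hypotheses (c_ge0 : forall i, 0 <= c i) (c_sum1 : \sum_i c i = 1).

Lemma convex_comb_le M : (forall i, f i <= M) -> \sum_i c i * f i <= M.
Proof.
move=> f_le; rewrite -[leRHS]mul1r -c_sum1 mulr_suml.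
by apply: ler_sum => i _; rewrite ler_wpM2l.
Qed.

Lemma convex_comb_max_support M : (forall i, f i <= M) -> M <= \sum_i c i * f i ->
  forall i, 0 < c i -> f i = M.
Proof.
move=> f_le M_le i ci_gt0.
have terms_ge0 j : true -> 0 <= c j * (M - f j) by rewrite mulr_ge0 ?subr_ge0.
have sum0 : \sum_j c j * (M - f j) = 0.
  apply/eqP; rewrite eq_le sumr_ge0 ?andbT //.
  under eq_bigr do rewrite mulrBr.
  by rewrite sumrB -mulr_suml c_sum1 mul1r subr_le0.
move/eqP: (psumr_eq0P terms_ge0 sum0 (i := i) isT).
by rewrite mulf_eq0 (gt_eqF ci_gt0) /= subr_eq0 => /eqP ->.
Qed.

End ConvexComb.

Section BinaryVectors.
Context {R : realType} {n : nat}.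

Definition bvec (p : {ffun 'I_n -> bool}) : 'cV[R]_n := \col_i (p i)%:R.

Lemma binvec_bvec p : binvec (bvec p).
Proof. by move=> i; rewrite mxE; case: (p i); [right|left]. Qed.

Lemma binvec_bvecE (z : 'cV[R]_n) : binvec z -> z = bvec [ffun i => z i 0 == 1].
Proof.
move=> z_bin; apply/matrixP => i j; rewrite (ord1 j) !mxE ffunE.
by case: (z_bin i) => ->; rewrite ?eqxx // eq_sym oner_eq0.
Qed.

Lemma binvec_unitbox {z : 'cV[R]_n} : binvec z -> unitbox z.
Proof. by move=> z_bin i; case: (z_bin i) => ->; rewrite lexx ler01. Qed.

Lemma SOL_binvec_exists (h : 'cV[R]_n -> R) : exists z, SOL h (@binvec R n) z.
Proof.
case: (arg_maxP (fun p => h (bvec p)) (isT : xpredT [ffun _ => false])) => p _ p_max.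
exists (bvec p); split; first exact: binvec_bvec.
by move=> z /binvec_bvecE ->; exact: p_max.
Qed.

End BinaryVectors.

Section LovaszBounds.
Context {R : realType} {n : nat}.
Implicit Types (h : 'cV[R]_n -> R) (y : 'cV[R]_n).

Lemma lovasz_le h y M : unitbox y -> (forall b, binvec b -> h b <= M) -> lovasz h y <= M.
Proof.
move=> y_box h_le; rewrite lovaszE; apply: convex_comb_le => [k||k].
- exact: lovasz_weight_ge0.
- exact: lovasz_weight_sum1.
- exact/h_le/binvec_lovasz_set.
Qed.

Lemma lovasz_le_lovasz_set h y : unitbox y -> exists k : 'I_n.+1, lovasz h y <= h (lovasz_set y k).
Proof.
move=> y_box; case: (arg_maxP (fun k : 'I_n.+1 => h (lovasz_set y k)) (isT : xpredT ord0)).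
move=> k _ k_max; exists k; rewrite lovaszE; apply: convex_comb_le => [j||j].
- exact: lovasz_weight_ge0.
- exact: lovasz_weight_sum1.
- exact: k_max.
Qed.

End LovaszBounds.

Section LovaszTheta.
Context {R : realType} {m r n : nat}.
Variables (F : 'cV[R]_m -> 'cV[R]_r) (C : 'M[R]_(r, n)).

Lemma lovasz_Theta x y : lovasz (Theta F C x) y = Theta F C x y
  + 2^-1 * (\sum_(k < n.+1) lovasz_weight y k * sqnorm (C *m lovasz_set y k)
            - sqnorm (C *m y)).
Proof.
rewrite lovaszE (convex_comb_Theta F C (fun k : 'I_n.+1 => lovasz_weight y k)).
  by rewrite lovasz_weight_decomp.
exact: lovasz_weight_sum1.
Qed.

Lemma Theta_le_lovasz x y : unitbox y -> Theta F C x y <= lovasz (Theta F C x) y.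
Proof.
move=> y_box; rewrite lovasz_Theta lerDl mulr_ge0 ?invr_ge0 ?ler0n // subr_ge0.
rewrite -[X in sqnorm (C *m X)](lovasz_weight_decomp y) mulmx_sumr.
under eq_bigr do rewrite -scalemxAr.
by apply: sqnorm_convex_comb_le => [k|]; [exact: lovasz_weight_ge0|exact: lovasz_weight_sum1].
Qed.

End LovaszTheta.

Section SaddlePoints.
Context {R : realType} {m r n : nat}.
Variables (F : 'cV[R]_m -> 'cV[R]_r) (C : 'M[R]_(r, n)) (X : set 'cV[R]_m).
Local Notation ThetaL := (fun x y => lovasz (Theta F C x) y).

Lemma saddle_global_minimax {xs ys yb} :
  saddle_point X (@unitbox R n) ThetaL xs ys -> SOL (Theta F C xs) (@binvec R n) yb ->
  global_minimax X (@binvec R n) (Theta F C) xs yb.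
Proof.
move=> [xs_X [ys_box [ys_max xs_min]]] [yb_bin yb_max].
do 3 split => //; move=> x x_X.
have [k k_ge] := lovasz_le_lovasz_set (Theta F C x) ys ys_box.
exists (lovasz_set ys k); first exact: binvec_lovasz_set.
apply: le_trans k_ge; apply: le_trans (xs_min _ x_X).
apply: le_trans (ys_max _ (binvec_unitbox yb_bin)).
exact: Theta_le_lovasz (binvec_unitbox yb_bin).
Qed.

Lemma saddle_conv_hull_SOL {xs ys} : saddle_point X (@unitbox R n) ThetaL xs ys ->
  conv_hull (SOL (Theta F C xs) (@binvec R n)) ys.
Proof.
move=> [_ [ys_box [ys_max _]]].
have bin_le b : binvec b -> Theta F C xs b <= lovasz (Theta F C xs) ys.
  move=> /binvec_unitbox b_box; apply: le_trans (ys_max _ b_box).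
  exact: Theta_le_lovasz.
have chain_SOL (k : 'I_n.+1) : 0 < lovasz_weight ys k ->
    SOL (Theta F C xs) (@binvec R n) (lovasz_set ys k).
  move=> wk; split=> [|b b_bin]; first exact: binvec_lovasz_set.
  suff -> : Theta F C xs (lovasz_set ys k) = lovasz (Theta F C xs) ys by exact: bin_le.
  apply: (convex_comb_max_support (c := fun j : 'I_n.+1 => lovasz_weight ys j)
    (f := fun j : 'I_n.+1 => Theta F C xs (lovasz_set ys j))) => //.
  - by move=> j; exact: lovasz_weight_ge0.
  - exact: lovasz_weight_sum1.
  - by move=> j; exact/bin_le/binvec_lovasz_set.
  - by rewrite lovaszE.
have [yb yb_SOL] := SOL_binvec_exists (Theta F C xs).
exists n.+1, (fun k => if 0 < lovasz_weight ys k then lovasz_set ys k else yb),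
  (fun k => lovasz_weight ys k); split; [|split; [|split]].
- by move=> k; case: ifP => // /chain_SOL.
- by move=> k; exact: lovasz_weight_ge0.
- exact: lovasz_weight_sum1.
- rewrite -[LHS](lovasz_weight_decomp ys); apply: eq_bigr => k _.
  case: ifPn => // wk.
  suff -> : lovasz_weight ys k = 0 by rewrite !scale0r.
  by apply/eqP; rewrite eq_le lovasz_weight_ge0 // andbT leNgt.
Qed.

End SaddlePoints.

Lemma small_quadratic_ge0 {R : realFieldType} (D S : R) :
  (forall e, 0 < e <= 1 -> 0 <= e * D + e ^+ 2 * S) -> 0 <= D.
Proof.
move=> h; rewrite leNgt; apply/negP => D_lt0.
have den_gt0 : 0 < `|S| - D by have := normr_ge0 S; lra.
pose e := - D / (`|S| - D).
have e_gt0 : 0 < e by rewrite divr_gt0 // oppr_gt0.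
have e_le1 : e <= 1 by rewrite ler_pdivrMr // mul1r; have := normr_ge0 S; lra.
have e_den : e * (`|S| - D) = - D by rewrite divfK // gt_eqF.
(* At this [e], [e * D + e ^+ 2 * S <= e ^+ 2 * D < 0]. *)
have := h e; rewrite e_gt0 e_le1 => /(_ isT).
have S_le : 0 <= `|S| - S by rewrite subr_ge0 ler_norm.
have := mulr_ge0 (sqr_ge0 e) S_le.
have e2D : e ^+ 2 * D < 0 by rewrite pmulr_rlt0 ?exprn_gt0.
have : e ^+ 2 * `|S| - e ^+ 2 * D = - (e * D).
  by transitivity (e * (e * (`|S| - D))); [ring|rewrite e_den; ring].
nra.
Qed.

Lemma continuous_sumr {R : realType} {T : topologicalType} {I : finType}
  (f : I -> T -> R) :
  (forall i, continuous (f i)) -> continuous (fun x => \sum_i f i x).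
Proof. by move=> f_cont; apply: (continuous_big add_continuous) => i _; exact: f_cont. Qed.

Section ThetaInX.
Context {R : realType} {m r n : nat}.
Variables (F : 'cV[R]_m -> 'cV[R]_r) (C : 'M[R]_(r, n)).
Hypothesis F_affine : affine_map F.

Lemma Theta_continuous z : continuous (fun x => Theta F C x z).
Proof.
have [A [b F_eq]] := F_affine.
pose c k := b k 0 - (C *m z) k 0.
pose g k (x : 'cV[R]_m) := \sum_j A k j * x j 0 + c k.
have g_cont k : continuous (g k).
  move=> x; rewrite /g /=.
  apply: (@continuousD _ _ _ (fun x : 'cV[R]_m => \sum_j A k j * x j 0) (fun _ => c k)).
    apply: continuous_sumr => j {}x; apply: (@continuousM _ _ (fun _ => A k j)).
      exact: cst_continuous.
    exact: coord_continuous.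
  exact: cst_continuous.
have -> : (fun x => Theta F C x z) = fun x => 2^-1 * \sum_k g k x ^+ 2.
  apply/funext => x; rewrite /Theta /sqnorm F_eq; congr (_ * _).
  by apply: eq_bigr => k _; rewrite /g /c !mxE addrA.
move=> x; apply: (@continuousM _ _ (fun _ => 2^-1)); first exact: cst_continuous.
by apply: continuous_sumr => k {}x; apply: (@continuousM _ _ (g k) (g k)); exact: g_cont.
Qed.

Lemma convex_set_comb {X : set 'cV[R]_m} {x x0} e : convex_set X -> X x -> X x0 ->
  0 <= e -> e <= 1 -> X (e *: x + (1 - e) *: x0).
Proof.
move=> X_conv x_X x0_X e_ge0 e_le1.
by have := X_conv x x0 (Itv01 e_ge0 e_le1) (mem_set x_X) (mem_set x0_X); rewrite inE.
Qed.

Lemma Theta_argmin_vdot_ge0 {X : set 'cV[R]_m} {z x0} : convex_set X -> X x0 ->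
  (forall x, X x -> Theta F C x0 z <= Theta F C x z) ->
  forall x, X x -> 0 <= vdot (F x0 - C *m z) (F x - F x0).
Proof.
move=> X_conv x0_X x0_min x x_X.
have [A [b F_eq]] := F_affine.
set a := F x0 - C *m z; set d := F x - F x0.
apply: (small_quadratic_ge0 _ (2^-1 * sqnorm d)) => e /andP[e_gt0 e_le1].
have := x0_min _ (convex_set_comb e X_conv x_X x0_X (ltW e_gt0) e_le1).
rewrite /Theta -/a.
have -> : F (e *: x + (1 - e) *: x0) - C *m z = a + e *: d.
  rewrite /a /d !F_eq mulmxDr -!scalemxAr.
  by apply/matrixP => i j; rewrite !mxE; ring.
rewrite sqnormD vdotZr sqnormZ.
nra.
Qed.

End ThetaInX.

Lemma sum_eq_indicator {R : pzSemiRingType} {I : finType} (f : I -> R) q :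
  \sum_p (p == q)%:R * f p = f q.
Proof. by rewrite (bigD1 q) //= eqxx mul1r big1 ?addr0 // => p /negbTE ->; rewrite mul0r. Qed.

Section Simplex.
Context {R : realType} {n : nat}.
Local Notation P := {ffun 'I_n -> bool}.
Local Notation N := #|{: P}|.
Implicit Types (mu : 'rV[R]_N) (p q : P).

(* Probability vectors on {0,1}^n are stored as row vectors indexed through
   [enum_rank], so that they inherit the topology of 'rV_N. *)
Definition weight mu p : R := mu 0 (enum_rank p).

Definition simplex : set 'rV[R]_N :=
  [set mu | (forall p, 0 <= weight mu p) /\ \sum_p weight mu p = 1].

Definition barycentre mu : 'cV[R]_n := \sum_p weight mu p *: bvec p.

Definition vertex q : 'rV[R]_N := \row_i (i == enum_rank q)%:R.

Definition mix t mu q : 'rV[R]_N := (1 - t) *: mu + t *: vertex q.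

Lemma weight_vertex q p : weight (vertex q) p = (p == q)%:R.
Proof. by rewrite /weight mxE (inj_eq enum_rank_inj). Qed.

Lemma simplex_vertex q : simplex (vertex q).
Proof.
split=> [p|]; first by rewrite weight_vertex ler0n.
under eq_bigr do rewrite weight_vertex -[(_ == _)%:R]mulr1.
exact: sum_eq_indicator.
Qed.

Lemma weight_mix t mu q p : weight (mix t mu q) p = (1 - t) * weight mu p + t * (p == q)%:R.
Proof. by rewrite /weight !mxE (inj_eq enum_rank_inj). Qed.

Lemma simplex_mix t mu q : 0 <= t -> t <= 1 -> simplex mu -> simplex (mix t mu q).
Proof.
move=> t_ge0 t_le1 [mu_ge0 mu_sum1]; split=> [p|].
  by rewrite weight_mix addr_ge0 ?mulr_ge0 ?subr_ge0 ?ler0n.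
under eq_bigr do rewrite weight_mix mulrC [t * _]mulrC.
by rewrite big_split /= -mulr_suml mu_sum1 mul1r sum_eq_indicator subrK.
Qed.

Lemma barycentre_mix t mu q : barycentre (mix t mu q) = (1 - t) *: barycentre mu + t *: bvec q.
Proof.
rewrite /barycentre; under eq_bigr do rewrite weight_mix scalerDl.
rewrite big_split /= scaler_sumr; congr (_ + _).
  by apply: eq_bigr => p _; rewrite scalerA.
rewrite (bigD1 q) //= eqxx mulr1 big1 ?addr0 // => p /negbTE ->.
by rewrite mulr0 scale0r.
Qed.

Lemma barycentre_unitbox {mu} : simplex mu -> unitbox (barycentre mu).
Proof.
move=> [mu_ge0 mu_sum1] i.
have -> : barycentre mu i 0 = wsum (weight mu) bvec (index_enum P) i.
  by rewrite summxE; apply: eq_bigr => p _; rewrite mxE.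
have := wsum_bounds (weight mu) bvec mu_ge0 binvec_bvec (index_enum P) i.
by rewrite mu_sum1.
Qed.

Lemma simplex_closed : closed simplex.
Proof.
have weight_cont p : continuous (weight^~ p) by move=> mu; exact: coord_continuous.
have -> : simplex = \bigcap_(p in [set: P]) (weight^~ p @^-1` [set x | 0 <= x])
    `&` ((fun mu => \sum_p weight mu p) @^-1` [set 1]).
  apply/seteqP; split=> mu /=; first by move=> [mu_ge0 mu_sum1]; split=> // p _; exact: mu_ge0.
  by move=> [mu_ge0 mu_sum1]; split=> // p; exact: mu_ge0.
apply: closedI.
  apply: closed_bigI => p _; apply: (continuous_closedP _).1 (weight_cont p) _ _.
  exact: closed_ge.
apply: (continuous_closedP _).1 (continuous_sumr _ weight_cont) _ _.
exact: closed_eq.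
Qed.

Lemma simplex_compact : compact simplex.
Proof.
apply: (subclosed_compact simplex_closed (rV_compact (fun _ => @segment_compact R 0 1))).
move=> mu [mu_ge0 mu_sum1] i /=; rewrite in_itv /=.
have -> : mu ord0 i = weight mu (enum_val i) by rewrite /weight enum_valK.
rewrite mu_ge0 -mu_sum1 (bigD1 (enum_val i)) //= lerDl.
by apply: sumr_ge0 => p _; exact: mu_ge0.
Qed.

End Simplex.

Section MixedTheta.
Context {R : realType} {m r n : nat}.
Variables (F : 'cV[R]_m -> 'cV[R]_r) (C : 'M[R]_(r, n)).
Local Notation P := {ffun 'I_n -> bool}.
Local Notation N := #|{: P}|.

Definition mixed_Theta x (mu : 'rV[R]_N) : R := \sum_p weight mu p * Theta F C x (bvec p).

Lemma mixed_Theta_barycentre x mu : simplex mu ->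
  mixed_Theta x mu = Theta F C x (barycentre mu)
    + 2^-1 * (\sum_p weight mu p * sqnorm (C *m bvec p) - sqnorm (C *m barycentre mu)).
Proof. by case=> _ mu_sum1; rewrite /mixed_Theta (convex_comb_Theta F C _ _ x mu_sum1). Qed.

Lemma mixed_Theta_mix t mu q x :
  mixed_Theta x (mix t mu q) = (1 - t) * mixed_Theta x mu + t * Theta F C x (bvec q).
Proof.
have -> : Theta F C x (bvec q) = \sum_p (p == q)%:R * Theta F C x (bvec p).
  by rewrite sum_eq_indicator.
rewrite /mixed_Theta !mulr_sumr -big_split /=.
by apply: eq_bigr => p _; rewrite weight_mix; ring.
Qed.

Variable X : set 'cV[R]_m.
Hypotheses (X_neq0 : X !=set0) (X_compact : compact X) (F_affine : affine_map F).

Lemma mixed_Theta_argmin_exists mu :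
  exists x, X x /\ forall x', X x' -> mixed_Theta x mu <= mixed_Theta x' mu.
Proof.
have cont : continuous (mixed_Theta^~ mu).
  rewrite /mixed_Theta; apply: continuous_sumr => p x.
  apply: (@continuousM _ _ (fun _ => weight mu p) (fun x => Theta F C x (bvec p)) x).
    exact: cst_continuous.
  exact: Theta_continuous.
have [x x_X x_min] := compact_EVT_min X_neq0 X_compact (continuous_subspaceT cont).
exists x; split=> [|x' x'_X]; first by rewrite inE in x_X.
by apply: x_min; rewrite inE.
Qed.

Lemma Theta_bvec_bounded :
  exists2 B, 0 <= B & forall x, X x -> forall p, Theta F C x (bvec p) <= B.
Proof.
have cont : continuous (fun x => \sum_p Theta F C x (bvec p)).
  by apply: continuous_sumr => p; exact: Theta_continuous.
have [c c_X c_max] := compact_EVT_max X_neq0 X_compact (continuous_subspaceT cont).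
exists (\sum_p Theta F C c (bvec p)); first by apply: sumr_ge0 => p _; exact: Theta_ge0.
move=> x x_X p; apply: le_trans (c_max x _); last by rewrite inE.
by rewrite (bigD1 p) //= lerDl; apply: sumr_ge0 => q _; exact: Theta_ge0.
Qed.

Variable xm : 'rV[R]_N -> 'cV[R]_m.
Hypothesis xm_argmin :
  forall mu, X (xm mu) /\ forall x, X x -> mixed_Theta (xm mu) mu <= mixed_Theta x mu.

Lemma min_mixed_Theta_lipschitz {B} mu nu :
  (forall x, X x -> forall p, Theta F C x (bvec p) <= B) ->
  mixed_Theta (xm mu) mu - mixed_Theta (xm nu) nu
    <= B * \sum_p `|weight mu p - weight nu p|.
Proof.
move=> B_bound; have [xnu_X _] := xm_argmin nu.
apply: le_trans (_ : mixed_Theta (xm nu) mu - mixed_Theta (xm nu) nu <= _).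
  by rewrite lerD2r; exact: (xm_argmin mu).2.
rewrite /mixed_Theta -sumrB mulr_sumr; apply: ler_sum => p _.
rewrite -mulrBl mulrC; apply: le_trans (ler_wpM2l (Theta_ge0 _ _ _ _) (ler_norm _)) _.
by rewrite ler_wpM2r ?normr_ge0 ?B_bound.
Qed.

Lemma min_mixed_Theta_continuous : continuous (fun mu => mixed_Theta (xm mu) mu).
Proof.
have [B B_ge0 B_bound] := Theta_bvec_bounded.
move=> nu; apply/(cvgrPdist_lt (F := nbhs nu)) => eps eps_gt0.
have dist_cont : continuous (fun mu : 'rV[R]_N => \sum_p `|weight mu p - weight nu p|).
  apply: continuous_sumr => p mu.
  apply: (@continuous_comp _ _ _ (fun mu : 'rV[R]_N => weight mu p - weight nu p)).
    by apply: continuousB; [exact: coord_continuous|exact: cst_continuous].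
  exact: norm_continuous.
have eps'_gt0 : 0 < eps / (B + 1) by rewrite divr_gt0 // ltr_wpDl.
move/(cvgrPdist_lt (F := nbhs nu))/(_ _ eps'_gt0): (dist_cont nu); apply: filterS => mu.
rewrite big1 => [|p _]; last by rewrite subrr normr0.
rewrite sub0r normrN ger0_norm; last by apply: sumr_ge0 => p _; exact: normr_ge0.
have := min_mixed_Theta_lipschitz mu nu B_bound.
have := min_mixed_Theta_lipschitz nu mu B_bound.
under eq_bigr do rewrite distrC.
set s := \sum_p `|weight mu p - weight nu p|.
move=> l1 l2 s_lt.
have Bs_lt : B * s < eps.
  apply: le_lt_trans (_ : B * (eps / (B + 1)) < eps); first by rewrite ler_wpM2l // ltW.
  by rewrite mulrA ltr_pdivrMr ?ltr_wpDl //; nra.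
by rewrite ltr_norml; apply/andP; split; lra.
Qed.

End MixedTheta.

(* If [us] and [ut] satisfy the optimality conditions for the targets [v] and
   [(1 - t) v + t w] (each tested against the other point), then moving the
   target towards [w] brings [ut] closer to [w] by at most O(t). *)
Lemma vi_pair_sqnorm_bound {R : realType} {r} {us ut v w : 'cV[R]_r} {t : R} : 0 < t ->
  0 <= vdot (us - v) (ut - us) ->
  0 <= vdot (ut - ((1 - t) *: v + t *: w)) (us - ut) ->
  sqnorm (us - w) - sqnorm (ut - w) <= t * (sqnorm (us - w) + sqnorm (w - v)).
Proof.
move=> t_gt0 vi_s vi_t.
set a := us - w; set e := ut - us; set g := w - v.
have E1 : us - v = a + g by apply/matrixP => i j; rewrite !mxE; ring.
have E2 : ut - w = a + e by apply/matrixP => i j; rewrite !mxE; ring.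
have E3 : ut - ((1 - t) *: v + t *: w) = a + g + e - t *: g.
  by apply/matrixP => i j; rewrite !mxE; ring.
have E4 : us - ut = - e by apply/matrixP => i j; rewrite !mxE; ring.
rewrite E1 -/e in vi_s; rewrite E3 E4 in vi_t; rewrite E2; clearbody a e g.
rewrite vdotDl in vi_s; rewrite !vdotNr !vdotDl !vdotNl !vdotZl in vi_t.
have sq1 := sqnorm_ge0 (t *: a + e); have sq2 := sqnorm_ge0 (t *: g - e).
rewrite sqnormD sqnormZ vdotZl in sq1; rewrite sqnormB sqnormZ vdotZl in sq2.
have sq3 := sqnorm_ge0 e.
rewrite sqnormD; rewrite !sqnorm_vdot in sq1 sq2 sq3 *.
move: vi_s vi_t sq1 sq2 sq3.
set aa := vdot a a; set ae := vdot a e; set ge := vdot g e; set ee := vdot e e; set gg := vdot g g.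
move=> vi_s vi_t sq1 sq2 sq3.
have k1 : ee <= t * ge by lra.
have k2 : t * ge <= t * (t * gg) by nra.
have k3 : t * (- 2 * ae) <= t * (t * aa + t * gg) by nra.
rewrite ler_pM2l // in k3.
nra.
Qed.

Section SaddleExistence.
Context {R : realType} {m r n : nat}.
Variables (F : 'cV[R]_m -> 'cV[R]_r) (C : 'M[R]_(r, n)) (X : set 'cV[R]_m).
Hypotheses (X_convex : convex_set X) (F_affine : affine_map F) (C_acute : acute C).
Local Notation P := {ffun 'I_n -> bool}.
Local Notation N := #|{: P}|.

Variable xm : 'rV[R]_N -> 'cV[R]_m.
Hypothesis xm_argmin :
  forall mu, X (xm mu) /\ forall x, X x -> mixed_Theta F C (xm mu) mu <= mixed_Theta F C x mu.
Variable mus : 'rV[R]_N.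
Hypotheses (mus_simplex : simplex mus)
  (mus_max : forall mu, simplex mu -> mixed_Theta F C (xm mu) mu <= mixed_Theta F C (xm mus) mus).

Let xs := xm mus.
Let value := mixed_Theta F C xs mus.

Lemma Theta_argmin_barycentre {mu} : simplex mu ->
  forall x, X x -> Theta F C (xm mu) (barycentre mu) <= Theta F C x (barycentre mu).
Proof.
move=> mu_simplex x x_X; have := (xm_argmin mu).2 x x_X.
by rewrite !(mixed_Theta_barycentre F C _ _ mu_simplex) lerD2r.
Qed.

(* Compare the minimisers for [mus] and for [mus] moved by [t] towards the
   vertex [q]; maximality of [mus] bounds the value of [q] at the latter. *)
Lemma Theta_bvec_sub_value_le q t : 0 < t -> t <= 1 ->
  Theta F C xs (bvec q) - value <= t * (2^-1 *
    (sqnorm (F xs - C *m bvec q) + sqnorm (C *m bvec q - C *m barycentre mus))).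
Proof.
move=> t_gt0 t_le1.
have mut_simplex := simplex_mix t mus q (ltW t_gt0) t_le1 mus_simplex.
set xt := xm (mix t mus q).
have [xs_X _] := xm_argmin mus; have [xt_X _] := xm_argmin (mix t mus q).
have xt_le : Theta F C xt (bvec q) <= value.
  have := mus_max _ mut_simplex; rewrite mixed_Theta_mix -/xt -/xs -/value.
  have : value <= mixed_Theta F C xt mus := (xm_argmin mus).2 _ xt_X.
  move=> value_le mix_le; rewrite -(ler_pM2l t_gt0).
  have : (1 - t) * value <= (1 - t) * mixed_Theta F C xt mus by rewrite ler_wpM2l ?subr_ge0.
  lra.
have vi_s := Theta_argmin_vdot_ge0 F C F_affine X_convex xs_X
  (Theta_argmin_barycentre mus_simplex) _ xt_X.
have vi_t := Theta_argmin_vdot_ge0 F C F_affine X_convex xt_X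
  (Theta_argmin_barycentre mut_simplex) _ xs_X.
rewrite barycentre_mix mulmxDr -!scalemxAr in vi_t.
have := vi_pair_sqnorm_bound t_gt0 vi_s vi_t.
move: xt_le; rewrite /Theta; lra.
Qed.

Lemma Theta_bvec_le_value q : Theta F C xs (bvec q) <= value.
Proof.
rewrite -subr_ge0; apply: (small_quadratic_ge0 _ (2^-1 *
  (sqnorm (F xs - C *m bvec q) + sqnorm (C *m bvec q - C *m barycentre mus)))).
move=> e /andP[e_gt0 e_le1]; have := Theta_bvec_sub_value_le q e e_gt0 e_le1.
nra.
Qed.

Lemma binvec_Theta_le_value z : binvec z -> Theta F C xs z <= value.
Proof. by move=> /binvec_bvecE ->; exact: Theta_bvec_le_value. Qed.

Lemma value_le_SOL z : SOL (Theta F C xs) (@binvec R n) z -> value <= Theta F C xs z.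
Proof.
case=> _ z_max; rewrite /value /mixed_Theta; apply: convex_comb_le => [p||p].
- exact: mus_simplex.1.
- exact: mus_simplex.2.
- exact/z_max/binvec_bvec.
Qed.

Lemma support_SOL p : 0 < weight mus p -> SOL (Theta F C xs) (@binvec R n) (bvec p).
Proof.
move=> p_gt0; split=> [|z z_bin]; first exact: binvec_bvec.
suff -> : Theta F C xs (bvec p) = value by exact: binvec_Theta_le_value.
have [w_ge0 w_sum1] := mus_simplex.
exact: (convex_comb_max_support w_ge0 w_sum1 value Theta_bvec_le_value (lexx _) p p_gt0).
Qed.

(* The chain sets of the barycentre are superlevel sets of the vertices
   weighted by [mus], and the charged vertices are maximisers. *)
Lemma lovasz_set_barycentre_SOL k : 0 < lovasz_weight (barycentre mus) k ->
  SOL (Theta F C xs) (@binvec R n) (lovasz_set (barycentre mus) k).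
Proof.
set ys := barycentre mus; move=> wk.
have ys_box : unitbox ys := barycentre_unitbox mus_simplex.
have lt_k : lovasz_y ys k.+1 < lovasz_y ys k by rewrite -subr_gt0.
have -> : lovasz_set ys k = superlevel (weight mus) bvec (index_enum P) (lovasz_y ys k.+1).
  rewrite (lovasz_set_superlevel _ ys_box _ lt_k); apply/matrixP => i j; rewrite !mxE.
  by rewrite /ys summxE /wsum; congr ((_ < _)%R%:R); apply: eq_bigr => p _; rewrite mxE.
apply: (superlevel_in _ _ _ _ (SOL (Theta F C xs) (@binvec R n))).
- exact: mus_simplex.1.
- exact: binvec_bvec.
- by move=> a b a_SOL b_SOL; apply: SOL_bjoin_bmeet.
- exact: support_SOL.
- by have /andP[] := lovasz_y_bounds _ ys_box k.+1.
- rewrite mus_simplex.2; apply: lt_le_trans lt_k _.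
  by have /andP[] := lovasz_y_bounds _ ys_box k.
Qed.

Lemma lovasz_barycentre : lovasz (Theta F C xs) (barycentre mus) = value.
Proof.
set ys := barycentre mus.
rewrite lovaszE -[RHS]mul1r -(lovasz_weight_sum1 ys) mulr_suml; apply: eq_bigr => k _.
have [wk_gt0|wk_le0] := ltP 0 (lovasz_weight ys k); last first.
  suff -> : lovasz_weight ys k = 0 by rewrite !mul0r.
  apply/eqP; rewrite eq_le wk_le0 lovasz_weight_ge0 //.
  exact: barycentre_unitbox.
congr (_ * _); apply/eqP; rewrite eq_le (binvec_Theta_le_value _ (binvec_lovasz_set _ _)).
exact/value_le_SOL/lovasz_set_barycentre_SOL.
Qed.

Lemma saddle_point_barycentre :
  saddle_point X (@unitbox R n) (fun x y => lovasz (Theta F C x) y) xs (barycentre mus).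
Proof.
have ys_box := barycentre_unitbox mus_simplex.
split; first exact: (xm_argmin mus).1.
split=> //; split=> [y y_box|x x_X].
  by rewrite lovasz_barycentre; apply: lovasz_le => //; exact: binvec_Theta_le_value.
by rewrite !lovasz_Theta lerD2r; exact: Theta_argmin_barycentre.
Qed.

End SaddleExistence.

Lemma saddle_point_exists {R : realType} {m r n : nat} (F : 'cV[R]_m -> 'cV[R]_r)
  (C : 'M[R]_(r, n)) (X : set 'cV[R]_m) :
  X !=set0 -> convex_set X -> compact X -> affine_map F -> acute C ->
  exists xs ys, saddle_point X (@unitbox R n) (fun x y => lovasz (Theta F C x) y) xs ys.
Proof.
move=> X_neq0 X_convex X_compact F_affine C_acute.
have [xm xm_argmin] := choice (mixed_Theta_argmin_exists F C X X_neq0 X_compact F_affine).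
have simplex_neq0 : (@simplex R n) !=set0.
  by exists (vertex [ffun _ => false]); exact: simplex_vertex.
have [mus mus_simplex mus_max] := compact_EVT_max simplex_neq0 simplex_compact
  (continuous_subspaceT (min_mixed_Theta_continuous F C X X_neq0 X_compact F_affine xm xm_argmin)).
rewrite inE in mus_simplex.
exists (xm mus), (barycentre mus).
apply: saddle_point_barycentre => // mu mu_simplex.
by apply: mus_max; rewrite inE.
Qed.

Theorem mainTheorem4 (R : realType) (m r n : nat) (X : set 'cV[R]_m)
  (F : 'cV[R]_m -> 'cV[R]_r) (C : 'M[R]_(r, n)) :
  X !=set0 -> convex_set X -> compact X ->
  affine_map F -> acute C -> nonzero_columns C ->
  let ThL := fun x y => lovasz (Theta F C x) y in
  (exists xs ys, saddle_point X (@unitbox R n) ThL xs ys) /\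
  (forall xs ys, saddle_point X (@unitbox R n) ThL xs ys ->
     forall yb, SOL (Theta F C xs) (@binvec R n) yb ->
       global_minimax X (@binvec R n) (Theta F C) xs yb) /\
  (forall xs ys, saddle_point X (@unitbox R n) ThL xs ys ->
     conv_hull (SOL (Theta F C xs) (@binvec R n)) ys).
Proof.
move=> X_neq0 X_convex X_compact F_affine C_acute _ ThL; split; [|split].
- exact: saddle_point_exists.
- by move=> xs ys xs_ys yb yb_SOL; apply: (saddle_global_minimax _ _ _ xs_ys yb_SOL).
- by move=> xs ys xs_ys; apply: (saddle_conv_hull_SOL _ _ _ xs_ys).
Qed.
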